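(* Let $M\le N$ and $\mathbf{A}\in\mathbb{R}^{M\times N}$ with full row rank. Let $\lambda>0$ and let $\rho:\mathbb{R}^{M\times M}\to\mathbb{R}$ be differentiable and $\mu$-strongly convex ($\mu>0$). Fix constants $K>0$ and $c>0$ and let $\mathcal{P}_{K,c}$ be the set of probability distributions $\pi$ of pairs $(\mathbf{x},\mathbf{y})\in\mathbb{R}^N\times\mathbb{R}^M$ with $\mathbb{E}_\pi\|\mathbf{x}\|_2^2\le K$, $\mathbb{E}_\pi\|\mathbf{y}\|_2^2\le K$, and $\mathbb{E}_\pi[\mathbf{y}\mathbf{y}^\top]\succeq c\,\mathbf{I}$. For $\pi\in\mathcal{P}_{K,c}$ let $\mathbf{B}^\ast_\pi$ be the unique minimizer over $\mathbf{B}\in\mathbb{R}^{M\times M}$ of $F_\pi(\mathbf{B})=\mathbb{E}_\pi\|\mathbf{A}^\top\mathbf{B}\mathbf{y}-\mathbf{x}\|_2^2+\lambda\rho(\mathbf{B})$. Then there is a constant $C>0$, depending on $\mathbf{A},K,c,\mu$ and $\nabla\rho(\mathbf{0})$ but not on $\lambda$, such that for all $\pi,\pi'\in\mathcal{P}_{K,c}$, $$\|\mathbf{B}^\ast_\pi-\mathbf{B}^\ast_{\pi'}\|_F\le\frac{C}{\lambda\mu}\,W_2(\pi,\pi').$$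
   Context: $\|\cdot\|_F$ is the Frobenius norm and $\nabla\rho$ is the gradient with respect to the Frobenius inner product; $\rho$ is $\mu$-strongly convex if $\rho-\frac{\mu}{2}\|\cdot\|_F^2$ is convex. $W_2$ denotes the 2-Wasserstein distance between probability distributions on $\mathbb{R}^N\times\mathbb{R}^M\cong\mathbb{R}^{N+M}$ with the Euclidean norm: $W_2(\pi,\pi')^2=\inf\mathbb{E}\|(\mathbf{x},\mathbf{y})-(\mathbf{x}',\mathbf{y}')\|_2^2$ over all couplings of $\pi$ and $\pi'$. *)

From HB Require Import structures.
From mathcomp Require Import all_boot all_order all_algebra.
From mathcomp Require Import all_classical all_reals all_analysis.
Set Implicit Arguments. Unset Strict Implicit. Unset Printing Implicit Defensive.
Import Order.TTheory GRing.Theory Num.Theory.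
Import numFieldNormedType.Exports.
Local Open Scope classical_set_scope.
Local Open Scope ring_scope.

Definition sqnorm {R : realType} {n : nat} (v : 'cV[R]_n) : R :=
  \sum_(i < n) v i 0 ^+ 2.

Definition frob {R : realType} {m n : nat} (B : 'M[R]_(m, n)) : R :=
  Num.sqrt (\sum_(i < m) \sum_(j < n) B i j ^+ 2).

(* The underlying space R^N x R^M, with the Borel sigma-algebra of its
   (product = Euclidean) topology. *)
Definition pairsp (R : realType) (n m : nat) : Type :=
  g_sigma_algebraType (@open ('cV[R]_n * 'cV[R]_m)%type).

Definition convex_fun {R : realType} {m : nat} (g : 'M[R]_m -> R) : Prop :=
  forall (X Y : 'M[R]_m) (t : R), 0 <= t <= 1 ->
    g ((1 - t) *: X + t *: Y) <= (1 - t) * g X + t * g Y.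

Definition strongly_convex {R : realType} {m : nat} (mu : R)
  (rho : 'M[R]_m -> R) : Prop :=
  convex_fun (fun X => rho X - mu / 2 * frob X ^+ 2).

(* gradient w.r.t. the Frobenius inner product at X: the matrix whose
   (i,j) entry is the derivative in direction of the elementary matrix E_ij *)
Definition grad {R : realType} {m : nat} (rho : 'M[R]_m -> R) (X : 'M[R]_m)
  : 'M[R]_m := \matrix_(i, j) ('d rho X (delta_mx i j : 'M[R]_m)).

Section Dist.
Context {R : realType} {n m : nat}.
Local Notation Z := (pairsp R n m).

Definition ymoment (P : probability Z R) : 'M[R]_m :=
  \matrix_(i, j) Rintegral P setT (fun z : Z => (z.2 i 0) * (z.2 j 0)).

Definition PKc (K c : R) (P : probability Z R) : Prop :=
  [/\ (\int[P]_z (sqnorm z.1)%:E <= K%:E)%E,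
      (\int[P]_z (sqnorm z.2)%:E <= K%:E)%E &
      forall v : 'cV[R]_m,
        c * (v^T *m v) 0 0 <= (v^T *m ymoment P *m v) 0 0 ].

Definition coupling (P Q : probability Z R) (G : probability (Z * Z)%type R)
  : Prop :=
  (forall A : set Z, measurable A -> G (fst @^-1` A) = P A) /\
  (forall A : set Z, measurable A -> G (snd @^-1` A) = Q A).

Definition W2sq (P Q : probability Z R) : \bar R :=
  ereal_inf [set (\int[G]_w (sqnorm (w.1.1 - w.2.1) + sqnorm (w.1.2 - w.2.2))%:E)%E
            | G in coupling P Q].

(* 2-Wasserstein distance (finite on P_{K,c}) *)
Definition W2 (P Q : probability Z R) : R := Num.sqrt (fine (W2sq P Q)).

Definition Fobj (A : 'M[R]_(m, n)) (lam : R) (rho : 'M[R]_m -> R)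
  (P : probability Z R) (B : 'M[R]_m) : \bar R :=
  (\int[P]_z (sqnorm (A^T *m B *m z.2 - z.1))%:E + (lam * rho B)%:E)%E.

Definition is_minimizer (A : 'M[R]_(m, n)) (lam : R) (rho : 'M[R]_m -> R)
  (P : probability Z R) (B : 'M[R]_m) : Prop :=
  forall B' : 'M[R]_m, (Fobj A lam rho P B <= Fobj A lam rho P B')%E.

End Dist.

From HB Require Import structures.
From mathcomp Require Import all_boot all_order all_algebra.
From mathcomp Require Import all_classical all_reals all_analysis.
From mathcomp Require Import measurable_realfun.
From mathcomp Require Import ring lra.
Set Implicit Arguments. Unset Strict Implicit. Unset Printing Implicit Defensive.
Import Order.TTheory GRing.Theory Num.Theory.
Import numFieldNormedType.Exports.
Local Open Scope classical_set_scope.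
Local Open Scope ring_scope.

(* Strong convexity of [lam * rho] makes the objective grow quadratically around its
   minimizer Bp: F(Bp) + lam mu / 4 |Bp - Y|^2 <= F(Y).  Adding this inequality for the
   minimizers Bp of F_pi and Bq of F_pi' bounds lam mu |Bq - Bp|^2 by the change of the
   data term E|A^T B y - x|^2 from Bp to Bq, measured under pi minus under pi'.  For a
   single sample that change is bilinear in (Bq - Bp, Bq + Bp), so under any coupling
   it is at most |Bq - Bp| (k / delta E|z - z'|^2 + delta k O(K)) for every delta > 0;
   taking the infimum over couplings and optimizing delta gives the W2 bound.  The
   factor k involves |Bq + Bp|, which is bounded independently of lam by comparing a
   minimizer with 0, using E[y y^T] >= c I, the full row rank of A and the gradient
   inequality for rho at 0. *)

Lemma lagrange_identity {R : comRingType} k (a b : 'I_k -> R) :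
  \sum_i \sum_j (a i * b j - a j * b i) ^+ 2 =
  2%:R * ((\sum_i a i ^+ 2) * (\sum_i b i ^+ 2) - (\sum_i a i * b i) ^+ 2).
Proof.
have eAB : (\sum_i a i ^+ 2) * (\sum_i b i ^+ 2) = \sum_i \sum_j a i ^+ 2 * b j ^+ 2.
  exact: big_distrlr.
have eBA : (\sum_i a i ^+ 2) * (\sum_i b i ^+ 2) = \sum_i \sum_j b i ^+ 2 * a j ^+ 2.
  by rewrite mulrC big_distrlr.
have ess : (\sum_i a i * b i) ^+ 2 = \sum_i \sum_j (a i * b i) * (a j * b j).
  by rewrite expr2 big_distrlr.
have -> : forall x y : R, 2%:R * (x - y) = x + x - 2%:R * y by move=> x y; ring.
rewrite {1}eAB eBA ess -big_split mulr_sumr -sumrB; apply: eq_bigr => i _ /=.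
rewrite -big_split mulr_sumr -sumrB; apply: eq_bigr => j _ /=; ring.
Qed.

Lemma cauchy_schwarz_sum {R : realDomainType} k (a b : 'I_k -> R) :
  (\sum_i a i * b i) ^+ 2 <= (\sum_i a i ^+ 2) * (\sum_i b i ^+ 2).
Proof.
rewrite -subr_ge0 -(pmulr_rge0 _ (ltr0n R 2)) -lagrange_identity.
by apply: sumr_ge0 => i _; apply: sumr_ge0 => j _; exact: sqr_ge0.
Qed.

Lemma amgm_weighted {R : realFieldType} (x y e : R) : 0 < e ->
  2 * (x * y) <= e * x ^+ 2 + e^-1 * y ^+ 2.
Proof.
move=> e0.
have -> : e * x ^+ 2 + e^-1 * y ^+ 2 = 2 * (x * y) + e^-1 * (e * x - y) ^+ 2.
  by field; rewrite gt_eqF.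
by rewrite lerDl mulr_ge0 ?sqr_ge0 // invr_ge0 ltW.
Qed.

Lemma le_div_add_div {R : realFieldType} (a b p q x : R) : 0 < a -> 0 < b ->
  0 <= p -> 0 <= q -> (a + b) * x <= p + q -> x <= p / a + q / b.
Proof.
move=> a0 b0 p0 q0 le_x; rewrite -(ler_pM2l (addr_gt0 a0 b0)).
apply: le_trans le_x _.
have -> : (a + b) * (p / a + q / b) = p + q + (b * (p / a) + a * (q / b)).
  by field; rewrite !gt_eqF.
by rewrite lerDl addr_ge0 // mulr_ge0 ?divr_ge0 // ltW.
Qed.

Lemma le_mul_sqrt_of_scaled {R : rcfType} (x k L W : R) : 0 <= W -> 0 <= k -> 0 <= L ->
  (forall de, 0 < de -> x <= k / de * W + de * k * L) -> x <= k * (1 + L) * Num.sqrt W.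
Proof.
move=> W0 k0 L0 le_x; apply/ler_addgt0Pr => e e0.
set r := Num.sqrt W; have r0 : 0 <= r := sqrtr_ge0 W.
have kL1 : 0 < k * L + 1 by have := mulr_ge0 k0 L0; lra.
(* take [de := sqrt W + eta]: then [k / de * W <= k * sqrt W] and [eta * k * L <= e] *)
set eta := e / (k * L + 1); have eta0 : 0 < eta := divr_gt0 e0 kL1.
have de0 : 0 < r + eta by lra.
have first_le : k / (r + eta) * W <= k * r.
  rewrite mulrAC -mulrA; apply: ler_wpM2l => //.
  by rewrite ler_pdivrMr // -[W]sqr_sqrtr // -/r; nra.
have slack : eta * (k * L + 1) = e by rewrite /eta divfK // gt_eqF.
by have := le_x _ de0; nra.
Qed.

Section Norms.
Context {R : realType}.

Definition dotv {k} (u v : 'cV[R]_k) : R := \sum_i u i 0 * v i 0.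

Definition sqfrob {p q} (X : 'M[R]_(p, q)) : R := \sum_i \sum_j X i j ^+ 2.

Lemma sqnorm_ge0 k (v : 'cV[R]_k) : 0 <= sqnorm v.
Proof. by apply: sumr_ge0 => i _; exact: sqr_ge0. Qed.

Lemma sqfrob_ge0 p q (X : 'M[R]_(p, q)) : 0 <= sqfrob X.
Proof. by apply: sumr_ge0 => i _; apply: sumr_ge0 => j _; exact: sqr_ge0. Qed.

Lemma sqr_frob p q (X : 'M[R]_(p, q)) : frob X ^+ 2 = sqfrob X.
Proof. exact/sqr_sqrtr/sqfrob_ge0. Qed.

Lemma sqfrobN p q (X : 'M[R]_(p, q)) : sqfrob (- X) = sqfrob X.
Proof. by apply: eq_bigr => i _; apply: eq_bigr => j _; rewrite mxE sqrrN. Qed.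

Lemma frobN p q (X : 'M[R]_(p, q)) : frob (- X) = frob X.
Proof. by rewrite /frob -!/(sqfrob _) sqfrobN. Qed.

Lemma sqfrob_tr p q (X : 'M[R]_(p, q)) : sqfrob X^T = sqfrob X.
Proof.
rewrite /sqfrob exchange_big; apply: eq_bigr => i _; apply: eq_bigr => j _.
by rewrite mxE.
Qed.

Lemma sqnormN k (v : 'cV[R]_k) : sqnorm (- v) = sqnorm v.
Proof. by apply: eq_bigr => i _; rewrite mxE sqrrN. Qed.

Lemma sqnormZ k (a : R) (v : 'cV[R]_k) : sqnorm (a *: v) = a ^+ 2 * sqnorm v.
Proof. by rewrite /sqnorm mulr_sumr; apply: eq_bigr => i _; rewrite mxE exprMn. Qed.

Lemma coord_sqr_le_sqnorm k (v : 'cV[R]_k) j : v j 0 ^+ 2 <= sqnorm v.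
Proof.
by rewrite /sqnorm (bigD1 j) //= lerDl; apply: sumr_ge0 => i _; exact: sqr_ge0.
Qed.

Lemma sqnorm_mulmx p k (M : 'M[R]_(p, k)) (v : 'cV[R]_k) :
  sqnorm (M *m v) <= sqfrob M * sqnorm v.
Proof.
rewrite /sqnorm /sqfrob mulr_suml; apply: ler_sum => i _.
by rewrite mxE; exact: (cauchy_schwarz_sum (fun j => M i j) (fun j => v j 0)).
Qed.

Lemma sqnormB_le k (u v : 'cV[R]_k) : sqnorm (u - v) <= 2 * sqnorm u + 2 * sqnorm v.
Proof.
rewrite /sqnorm !mulr_sumr -big_split; apply: ler_sum => i _ /=; rewrite !mxE.
by have := sqr_ge0 (u i 0 + v i 0); lra.
Qed.

Lemma sqfrobD_le p q (X Y : 'M[R]_(p, q)) :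
  sqfrob (X + Y) <= 2 * sqfrob X + 2 * sqfrob Y.
Proof.
rewrite /sqfrob !mulr_sumr -big_split; apply: ler_sum => i _ /=.
rewrite !mulr_sumr -big_split; apply: ler_sum => j _ /=; rewrite !mxE.
by have := sqr_ge0 (X i j - Y i j); lra.
Qed.

Lemma sqnorm_subr_ge k (a x : 'cV[R]_k) : sqnorm a / 2 - sqnorm x <= sqnorm (a - x).
Proof.
rewrite /sqnorm mulr_suml -sumrB; apply: ler_sum => i _; rewrite !mxE.
by have := sqr_ge0 (a i 0 - 2 * x i 0); lra.
Qed.

Lemma sqnorm_convex k (a b x : 'cV[R]_k) (t : R) : 0 <= t <= 1 ->
  sqnorm ((1 - t) *: a + t *: b - x) <= (1 - t) * sqnorm (a - x) + t * sqnorm (b - x).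
Proof.
move=> /andP[t0 t1]; rewrite /sqnorm !mulr_sumr -big_split; apply: ler_sum => i _ /=.
rewrite !mxE; have := sqr_ge0 (a i 0 - b i 0).
have : 0 <= t * (1 - t) by apply: mulr_ge0; lra.
nra.
Qed.

Lemma sqfrob_combination p q (X Y : 'M[R]_(p, q)) (t : R) :
  sqfrob ((1 - t) *: X + t *: Y) =
  (1 - t) * sqfrob X + t * sqfrob Y - t * (1 - t) * sqfrob (X - Y).
Proof.
rewrite /sqfrob !mulr_sumr -big_split -sumrB; apply: eq_bigr => i _ /=.
rewrite !mulr_sumr -big_split -sumrB; apply: eq_bigr => j _ /=.
by rewrite !mxE; ring.
Qed.

Lemma dotv_amgm k (u v : 'cV[R]_k) (e : R) : 0 < e ->
  2 * dotv u v <= e * sqnorm u + e^-1 * sqnorm v.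
Proof.
move=> e0; rewrite /dotv /sqnorm !mulr_sumr -big_split; apply: ler_sum => i _.
exact: amgm_weighted.
Qed.

Lemma frob_dot_amgm p q (X Y : 'M[R]_(p, q)) (e : R) : 0 < e ->
  - (e * sqfrob X + e^-1 * sqfrob Y) <= 2 * \sum_i \sum_j X i j * Y i j.
Proof.
move=> e0; rewrite -subr_ge0 opprK /sqfrob !mulr_sumr -!big_split.
apply: sumr_ge0 => i _ /=; rewrite !mulr_sumr -!big_split.
apply: sumr_ge0 => j _ /=; have := amgm_weighted (- X i j) (Y i j) e0.
by rewrite sqrrN; lra.
Qed.

Lemma sqnorm_subr_diff k (a b x : 'cV[R]_k) :
  sqnorm (a - x) - sqnorm (b - x) = dotv (a - b) (a + b - 2 *: x).
Proof. by rewrite /sqnorm /dotv -sumrB; apply: eq_bigr => i _; rewrite !mxE; ring. Qed.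

Lemma dotvC k (u v : 'cV[R]_k) : dotv u v = dotv v u.
Proof. by apply: eq_bigr => i _; rewrite mulrC. Qed.

Lemma dotvB k (u v u' v' : 'cV[R]_k) :
  dotv u v - dotv u' v' = dotv (u - u') v + dotv u' (v - v').
Proof.
by rewrite /dotv -sumrB -big_split; apply: eq_bigr => i _ /=; rewrite !mxE; ring.
Qed.

End Norms.

Section FullRowRank.
Context {R : realType}.

Lemma trmx_self_eq0 n (w : 'rV[R]_n) : w *m w^T = 0 -> w = 0.
Proof.
move=> /(congr1 (fun M : 'M[R]_1 => M 0 0)); rewrite !mxE => sum0.
apply/rowP => j; rewrite mxE; apply/eqP; rewrite -sqrf_eq0; apply/eqP.
apply: (psumr_eq0P (P := predT) (F := fun j => w 0 j ^+ 2)) => // [i _|].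
  exact: sqr_ge0.
by rewrite -[RHS]sum0; apply: eq_bigr => i _; rewrite mxE expr2.
Qed.

Lemma row_free_mul_trmx m n (A : 'M[R]_(m, n)) : row_free A -> row_free (A *m A^T).
Proof.
move=> freeA; apply: inj_row_free => v vAAt0.
apply: (row_free_inj freeA); rewrite mul0mx /=; apply: trmx_self_eq0.
by rewrite trmx_mul mulmxA -(mulmxA v) vAAt0 mul0mx.
Qed.

Lemma full_row_rank_sqnorm_lb m n (A : 'M[R]_(m, n)) : \rank A = m ->
  exists2 s, 0 < s & forall v : 'cV[R]_m, s * sqnorm v <= sqnorm (A^T *m v).
Proof.
move=> rkA; have freeA : row_free A by rewrite /row_free rkA.
have AAt_unit : A *m A^T \in unitmx by rewrite -row_free_unit row_free_mul_trmx.
set L := invmx (A *m A^T) *m A.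
have L0 := sqfrob_ge0 L.
exists (sqfrob L + 1)^-1 => [|v]; first by rewrite invr_gt0; lra.
have le_v : sqnorm v <= sqfrob L * sqnorm (A^T *m v).
  by rewrite -{1}[v](mulKmx AAt_unit) -mulmxA mulmxA sqnorm_mulmx.
have := sqnorm_ge0 (A^T *m v).
by rewrite [_ * sqnorm v]mulrC ler_pdivrMr; [nra | lra].
Qed.

End FullRowRank.

Section LossDifference.
Context {R : realType}.

Lemma dotv_le_scaled k (p q : 'cV[R]_k) (a b d de : R) : 0 < d -> 0 < de ->
  sqnorm p <= d ^+ 2 * a -> sqnorm q <= b -> 2 * dotv p q <= d * (a / de + de * b).
Proof.
move=> d0 de0 pa qb; have e0 : 0 < (de * d)^-1 by rewrite invr_gt0 mulr_gt0.
apply: (le_trans (dotv_amgm p q e0)); rewrite invrK.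
have -> : d * (a / de + de * b) = (de * d)^-1 * (d ^+ 2 * a) + de * d * b.
  by field; rewrite !gt_eqF.
by apply: lerD; apply: ler_wpM2l => //; rewrite ?mulr_ge0 ?ltW.
Qed.

Lemma sqnorm_mulmx_mulmx p q k (M : 'M[R]_(p, q)) (N : 'M[R]_(q, k)) (w : 'cV[R]_k) :
  sqnorm (M *m (N *m w)) <= sqfrob M * (sqfrob N * sqnorm w).
Proof.
apply: (le_trans (sqnorm_mulmx M (N *m w))).
by apply: ler_wpM2l; [exact: sqfrob_ge0 | exact: sqnorm_mulmx].
Qed.

Lemma sqnorm_affine_le p q k (M : 'M[R]_(p, q)) (N : 'M[R]_(q, k)) w (u : 'cV[R]_p) :
  sqnorm (M *m (N *m w) - 2 *: u) <=
  2 * (sqfrob M * (sqfrob N * sqnorm w)) + 8 * sqnorm u.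
Proof.
apply: (le_trans (sqnormB_le _ _)); rewrite sqnormZ.
by have := sqnorm_mulmx_mulmx M N w; lra.
Qed.

Definition loss_lip_const p q (A : 'M[R]_(p, q)) (S : R) : R :=
  sqfrob A + 2 * sqfrob A * S + 8.

Lemma loss_lip_const_gt0 p q (A : 'M[R]_(p, q)) S : 0 <= S -> 0 < loss_lip_const A S.
Proof.
move=> S0; have := sqfrob_ge0 A; rewrite /loss_lip_const => A0.
by have := mulr_ge0 A0 S0; lra.
Qed.

Lemma loss_lip_const_le p q (A : 'M[R]_(p, q)) S S' :
  S <= S' -> loss_lip_const A S <= loss_lip_const A S'.
Proof.
move=> SS'; rewrite /loss_lip_const lerD2r lerD2l -!mulrA ler_wpM2l //.
by rewrite ler_wpM2l ?sqfrob_ge0.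
Qed.

Lemma loss_difference_dotv m n (A : 'M[R]_(m, n)) (B1 B2 : 'M[R]_m) (x x' : 'cV[R]_n)
    (y y' : 'cV[R]_m) :
  (sqnorm (A^T *m B2 *m y - x) - sqnorm (A^T *m B1 *m y - x)) -
  (sqnorm (A^T *m B2 *m y' - x') - sqnorm (A^T *m B1 *m y' - x')) =
  dotv (A^T *m ((B2 - B1) *m (y - y'))) (A^T *m ((B2 + B1) *m y) - 2 *: x) +
  dotv (A^T *m ((B2 + B1) *m (y - y')) - 2 *: (x - x')) (A^T *m ((B2 - B1) *m y')).
Proof.
have diffE w : A^T *m B2 *m w - A^T *m B1 *m w = A^T *m ((B2 - B1) *m w).
  by rewrite -!mulmxA -mulmxBr mulmxBl.
have sumE w : A^T *m B2 *m w + A^T *m B1 *m w = A^T *m ((B2 + B1) *m w).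
  by rewrite -!mulmxA -mulmxDr mulmxDl.
have swap (a u b v : 'cV[R]_n) : a - u - (b - v) = a - b - (u - v).
  by apply/matrixP => i j; rewrite !mxE; ring.
rewrite !sqnorm_subr_diff !diffE !sumE dotvB -!mulmxBr swap -scalerBr -!mulmxBr.
by rewrite [X in _ + X]dotvC.
Qed.

(* The loss difference is bilinear in (B2 - B1, B2 + B1), hence Lipschitz in the
   sample with a constant proportional to frob (B2 - B1). *)
Lemma loss_difference_le m n (A : 'M[R]_(m, n)) (B1 B2 : 'M[R]_m) (x x' : 'cV[R]_n)
    (y y' : 'cV[R]_m) (de : R) :
  0 < de -> 0 < frob (B2 - B1) ->
  2 * ((sqnorm (A^T *m B2 *m y - x) - sqnorm (A^T *m B1 *m y - x)) -
       (sqnorm (A^T *m B2 *m y' - x') - sqnorm (A^T *m B1 *m y' - x'))) <=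
  frob (B2 - B1) *
    (loss_lip_const A (sqfrob (B2 + B1)) / de * (sqnorm (x - x') + sqnorm (y - y')) +
     de * loss_lip_const A (sqfrob (B2 + B1)) * (sqnorm y + sqnorm x + sqnorm y')).
Proof.
move=> de0 d0; rewrite loss_difference_dotv.
set d := frob _; set D := B2 - B1; set S := B2 + B1.
have DA w : sqnorm (A^T *m (D *m w)) <= d ^+ 2 * (sqfrob A * sqnorm w).
  apply: le_trans (sqnorm_mulmx_mulmx _ _ _) _.
  by rewrite sqfrob_tr -(sqr_frob D) mulrCA lexx.
have SA w u := sqnorm_affine_le A^T S w u; rewrite sqfrob_tr in SA.
have bound1 := dotv_le_scaled d0 de0 (DA (y - y')) (SA y x).
have de0' : 0 < de^-1 by rewrite invr_gt0.
have bound2 := dotv_le_scaled d0 de0' (DA y') (SA (y - y') (x - x')).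
rewrite dotvC invrK in bound2; rewrite -/d in bound1 bound2.
apply: (le_trans (y := d * ((sqfrob A * sqnorm (y - y') +
    (2 * (sqfrob A * (sqfrob S * sqnorm (y - y'))) + 8 * sqnorm (x - x'))) / de +
  de * (2 * (sqfrob A * (sqfrob S * sqnorm y)) + 8 * sqnorm x + sqfrob A * sqnorm y')))).
  by move: bound1 bound2; lra.
have fA := sqfrob_ge0 A; have fS := sqfrob_ge0 S; have fAS := mulr_ge0 fA fS.
have := sqnorm_ge0 (x - x'); have := sqnorm_ge0 (y - y').
have := sqnorm_ge0 y; have := sqnorm_ge0 x; have := sqnorm_ge0 y'.
rewrite /loss_lip_const -/S => ? ? ? ? ?; apply: ler_wpM2l; first exact: ltW.
apply: lerD; last by rewrite -mulrA; apply: ler_wpM2l; [exact: ltW | nra].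
by rewrite mulrAC; apply: ler_wpM2r; [rewrite invr_ge0 ltW | nra].
Qed.
End LossDifference.

Section Convexity.
Context {R : realType}.

Lemma differential_le_quotient (V : normedModType R) (f : V -> R) (X v : V) (c : R) :
  differentiable f X ->
  (forall t, 0 < t <= 1 -> t^-1 * (f (X + t *: v) - f X) <= c) -> 'd f X v <= c.
Proof.
move=> dfX quot_le.
rewrite -deriveE // /derive.
have cvg := @diff_derivable _ _ _ f X v dfX.
set g := (fun h : R => _).
rewrite (cvg_at_rightE g 0 cvg); apply: limr_le.
  apply/cvg_ex; exists (lim (g @ 0^')).
  move=> B /cvg /nbhs_ballP [_ /posnumP[e] xe_B].
  by exists e%:num => //= y xe_y /gt_eqF/negbT/xe_B; exact.
exists 1 => //= t; rewrite /ball /= sub0r normrN => t1 t0.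
rewrite /g /= [t *: v + X]addrC; apply: quot_le; rewrite t0 /=.
by move: t1; rewrite gtr0_norm // => /ltW.
Qed.

Context {m : nat}.
Implicit Types (rho : 'M[R]_m -> R) (X Y : 'M[R]_m).

Lemma differential_grad rho X Y : 'd rho X Y = \sum_i \sum_j Y i j * grad rho X i j.
Proof.
rewrite {1}(matrix_sum_delta Y) linear_sum; apply: eq_bigr => i _.
rewrite linear_sum; apply: eq_bigr => j _.
by rewrite linearZ /grad mxE.
Qed.

Lemma strongly_convex_combination mu rho X Y (t : R) :
  strongly_convex mu rho -> 0 <= t <= 1 ->
  rho ((1 - t) *: X + t *: Y) <=
  (1 - t) * rho X + t * rho Y - mu / 2 * (t * (1 - t)) * sqfrob (X - Y).
Proof.
move=> convex t01; have := convex X Y t t01.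
by rewrite !sqr_frob sqfrob_combination; lra.
Qed.

Lemma strongly_convex_convex mu rho : 0 <= mu -> strongly_convex mu rho -> convex_fun rho.
Proof.
move=> mu0 convex X Y t t01; have := strongly_convex_combination X Y convex t01.
have : 0 <= mu / 2 * (t * (1 - t)) * sqfrob (X - Y).
  case/andP: t01 => t0 t1.
  by rewrite !mulr_ge0 ?sqfrob_ge0 ?subr_ge0 // divr_ge0.
lra.
Qed.

Lemma convex_grad_le rho X Y : differentiable rho X -> convex_fun rho ->
  \sum_i \sum_j (Y - X) i j * grad rho X i j <= rho Y - rho X.
Proof.
move=> drho convex; rewrite -differential_grad.
apply: differential_le_quotient => // t /andP[t0 t1].
have -> : X + t *: (Y - X) = (1 - t) *: X + t *: Y.
  by rewrite scalerBr scalerBl scale1r addrA addrAC.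
have := convex X Y t; rewrite ltW // t1 => /(_ isT) hc.
by rewrite mulrC ler_pdivrMr //; lra.
Qed.

End Convexity.

Section MeasurableVectors.
Context {d} {T : measurableType d} {R : realType}.

Definition measurable_cV {k} (u : T -> 'cV[R]_k) : Prop :=
  forall i, measurable_fun setT (fun t => u t i 0).

Lemma measurable_cVB k (u v : T -> 'cV[R]_k) :
  measurable_cV u -> measurable_cV v -> measurable_cV (fun t => u t - v t).
Proof.
move=> mu mv i; rewrite (_ : (fun t => _) = (fun t => u t i 0 - v t i 0)).
  exact: measurable_funB.
by apply/funext => t; rewrite !mxE.
Qed.

Lemma measurable_cV_mulmx p k (M : 'M[R]_(p, k)) (u : T -> 'cV[R]_k) :
  measurable_cV u -> measurable_cV (fun t => M *m u t).
Proof.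
move=> mu i; rewrite (_ : (fun t => _) = (fun t => \sum_j M i j * u t j 0)).
  by apply: measurable_sum => j; apply: measurable_funM.
by apply/funext => t; rewrite mxE.
Qed.

Lemma measurable_sqnorm k (u : T -> 'cV[R]_k) :
  measurable_cV u -> measurable_fun setT (fun t => sqnorm (u t)).
Proof. by move=> mu; apply: measurable_sum => j; apply: measurable_funX. Qed.

End MeasurableVectors.

Lemma measurable_cV_comp d d' (T : measurableType d) (T' : measurableType d')
    (R : realType) k (u : T -> 'cV[R]_k) (phi : T' -> T) :
  measurable_cV u -> measurable_fun setT phi -> measurable_cV (fun t => u (phi t)).
Proof. by move=> mu mphi i; exact: (measurableT_comp (f := fun t => u t i 0)). Qed.

Section RealIntegrals.
Context {d} {T : measurableType d} {R : realType} (P : probability T R).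
Local Notation integrable f := (P.-integrable setT (EFin \o f)).
Implicit Types f g : T -> R.

Lemma integrableRD f g : integrable f -> integrable g -> integrable (fun t => f t + g t).
Proof.
by move=> if_ ig; apply: (eq_integrable _ _ _ _ (integrableD measurableT if_ ig)).
Qed.

Lemma integrableRB f g : integrable f -> integrable g -> integrable (fun t => f t - g t).
Proof.
by move=> if_ ig; apply: (eq_integrable _ _ _ _ (integrableB measurableT if_ ig)).
Qed.

Lemma integrableRZ (k : R) f : integrable f -> integrable (fun t => k * f t).
Proof.
by move=> if_; apply: (eq_integrable _ _ _ _ (integrableZl measurableT k if_)).
Qed.

Lemma integrableR_sum (I : Type) (s : seq I) (F : I -> T -> R) :
  (forall i, integrable (F i)) -> integrable (fun t => \sum_(i <- s) F i t).
Proof.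
move=> iF; elim: s => [|i s IH].
  apply: (eq_integrable _ _ _ _ (integrable0 P setT)) => //.
  by move=> t _ /=; rewrite big_nil.
apply: (eq_integrable _ _ _ _ (integrableRD (iF i) IH)) => //.
by move=> t _ /=; rewrite big_cons.
Qed.

Lemma RintegralR_sum (I : Type) (s : seq I) (F : I -> T -> R) :
  (forall i, integrable (F i)) ->
  Rintegral P setT (fun t => \sum_(i <- s) F i t) = \sum_(i <- s) Rintegral P setT (F i).
Proof.
move=> iF; elim: s => [|i s IH].
  rewrite big_nil; under eq_Rintegral do rewrite big_nil.
  by rewrite Rintegral_cst // mul0r.
rewrite big_cons -IH -RintegralD //; last exact: integrableR_sum.
by apply: eq_Rintegral => t _; rewrite big_cons.
Qed.

Lemma integrableR_le f g : measurable_fun setT f -> integrable g ->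
  (forall t, `|f t| <= g t) -> integrable f.
Proof.
move=> mf ig fg; apply: (le_integrable measurableT _ _ ig); first exact/measurable_EFinP.
by move=> t _ /=; rewrite lee_fin (le_trans (fg t)) // ler_norm.
Qed.

Lemma integrableR_ge0_le f (K : R) : measurable_fun setT f -> (forall t, 0 <= f t) ->
  (\int[P]_t (f t)%:E <= K%:E)%E -> integrable f.
Proof.
move=> mf f0 fK; apply/integrableP; split; first exact/measurable_EFinP.
rewrite (eq_integral (fun t => (f t)%:E)) => [|t _]; last by rewrite /= ger0_norm.
exact: le_lt_trans fK (ltry K).
Qed.

Lemma Rintegral_ge0_le f (K : R) : (forall t, 0 <= f t) ->
  (\int[P]_t (f t)%:E <= K%:E)%E -> Rintegral P setT f <= K.
Proof.
move=> f0 fK; rewrite -lee_fin /Rintegral fineK //.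
rewrite ge0_fin_numE; last by apply: integral_ge0 => t _; rewrite lee_fin.
exact: le_lt_trans fK (ltry K).
Qed.

Lemma integral_EFin f : integrable f -> (\int[P]_t (f t)%:E)%E = (Rintegral P setT f)%:E.
Proof. by move=> if_; rewrite /Rintegral fineK //; exact: integrable_fin_num. Qed.

End RealIntegrals.

Lemma integral_marginal d d' (T : measurableType d) (T' : measurableType d')
    (R : realType) (P : probability T R) (G : probability T' R) (phi : T' -> T)
    (f : T -> R) :
  measurable_fun setT phi -> (forall A, measurable A -> G (phi @^-1` A) = P A) ->
  measurable_fun setT f -> P.-integrable setT (EFin \o f) ->
  G.-integrable setT (EFin \o (f \o phi)) /\
  Rintegral G setT (f \o phi) = Rintegral P setT f.
Proof.
move=> mphi marg mf if_.
have pushE : forall h : T -> \bar R,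
    (\int[pushforward G phi]_x h x = \int[P]_x h x)%E.
  by move=> h; apply: eq_measure_integral => A mA _; exact: marg.
have mEf : measurable_fun setT (EFin \o f) by exact/measurable_EFinP.
have iGf : G.-integrable setT (EFin \o (f \o phi)).
  apply/integrableP; split; first exact/measurable_EFinP/measurableT_comp.
  have := ge0_integral_pushforward mphi G (f := abse \o (EFin \o f)) measurableT
    (measurableT_comp (@abse_measurable _ setT) mEf) (fun x _ => abse_ge0 _).
  by rewrite preimage_setT pushE => <-; case/integrableP: if_.
split => //; rewrite /Rintegral -pushE.
have := integral_pushforward mphi mEf _ measurableT.
by rewrite preimage_setT => ->.
Qed.

Section PairSpace.
Context {R : realType} {n m : nat}.
Local Notation Z := (pairsp R n m).

Lemma measurable_pairsp_continuous (f : ('cV[R]_n * 'cV[R]_m)%type -> R) :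
  continuous f -> measurable_fun [set: Z] (f : Z -> R).
Proof.
move=> /continuousP cf; apply: (measurability _ (RGenOpens.measurableE R)).
move=> _ [_ [a [b ->] <-]]; apply: sub_sigma_algebra.
by rewrite setTI; apply: cf; exact: interval_open.
Qed.

Lemma measurable_cV_fst : measurable_cV (fun z : Z => z.1).
Proof.
move=> i; apply: (measurable_pairsp_continuous (f := fun z => z.1 i 0)).
move=> z; apply: (@continuous_comp _ _ _ fst (fun M : 'cV[R]_n => M i 0)).
  exact: cvg_fst.
exact: coord_continuous.
Qed.

Lemma measurable_cV_snd : measurable_cV (fun z : Z => z.2).
Proof.
move=> i; apply: (measurable_pairsp_continuous (f := fun z => z.2 i 0)).
move=> z; apply: (@continuous_comp _ _ _ snd (fun M : 'cV[R]_m => M i 0)).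
  exact: cvg_snd.
exact: coord_continuous.
Qed.

Definition second_moments_le (K : R) (P : probability Z R) : Prop :=
  (\int[P]_z (sqnorm z.1)%:E <= K%:E)%E /\ (\int[P]_z (sqnorm z.2)%:E <= K%:E)%E.

Lemma PKc_second_moments K c P : PKc K c P -> second_moments_le K P.
Proof. by case. Qed.

Section Moments.
Variables (K : R) (P : probability Z R).
Hypothesis PK : second_moments_le K P.

Lemma integrable_sqnorm_fst : P.-integrable setT (EFin \o (fun z : Z => sqnorm z.1)).
Proof.
by apply: (integrableR_ge0_le _ _ PK.1); [exact: measurable_sqnorm measurable_cV_fst|
  move=> z; exact: sqnorm_ge0].
Qed.

Lemma integrable_sqnorm_snd : P.-integrable setT (EFin \o (fun z : Z => sqnorm z.2)).
Proof.
by apply: (integrableR_ge0_le _ _ PK.2); [exact: measurable_sqnorm measurable_cV_snd|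
  move=> z; exact: sqnorm_ge0].
Qed.

Lemma Rintegral_sqnorm_fst_le : Rintegral P setT (fun z : Z => sqnorm z.1) <= K.
Proof. by apply: Rintegral_ge0_le PK.1 => z; exact: sqnorm_ge0. Qed.

Lemma Rintegral_sqnorm_snd_le : Rintegral P setT (fun z : Z => sqnorm z.2) <= K.
Proof. by apply: Rintegral_ge0_le PK.2 => z; exact: sqnorm_ge0. Qed.

Lemma second_moments_bound_ge0 : 0 <= K.
Proof.
apply: le_trans Rintegral_sqnorm_fst_le.
by apply: Rintegral_ge0 => z _; exact: sqnorm_ge0.
Qed.

Lemma integrable_quadratic (f : Z -> R) (a : R) : measurable_fun setT f ->
  (forall z, `|f z| <= a * (sqnorm z.1 + sqnorm z.2)) ->
  P.-integrable setT (EFin \o f).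
Proof.
move=> mf fa; apply: integrableR_le mf _ fa.
by apply/integrableRZ/integrableRD; [exact: integrable_sqnorm_fst|
  exact: integrable_sqnorm_snd].
Qed.

Lemma integrable_sqnorm_mulmx_snd p (B : 'M[R]_(p, m)) :
  P.-integrable setT (EFin \o (fun z : Z => sqnorm (B *m z.2))).
Proof.
apply: (integrable_quadratic (a := sqfrob B)) => [|z].
  exact: measurable_sqnorm (measurable_cV_mulmx B measurable_cV_snd).
rewrite ger0_norm ?sqnorm_ge0 //; have := sqnorm_mulmx B z.2.
by have := sqnorm_ge0 z.1; have := sqfrob_ge0 B; nra.
Qed.

Lemma integrable_snd_coordM j k :
  P.-integrable setT (EFin \o (fun z : Z => z.2 j 0 * z.2 k 0)).
Proof.
apply: (integrable_quadratic (a := 1)) => [|z].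
  by apply: measurable_funM; exact: measurable_cV_snd.
have := amgm_weighted `|z.2 j 0| `|z.2 k 0| ltr01.
rewrite invr1 !mul1r !real_normK ?num_real // -normrM.
have := coord_sqr_le_sqnorm z.2 j; have := coord_sqr_le_sqnorm z.2 k.
have := sqnorm_ge0 z.1; lra.
Qed.

Lemma Rintegral_sqr_dot_snd (w : 'cV[R]_m) :
  Rintegral P setT (fun z : Z => (w^T *m z.2) 0 0 ^+ 2) = (w^T *m ymoment P *m w) 0 0.
Proof.
have expand z : (w^T *m z.2) 0 0 ^+ 2 =
    \sum_j \sum_k (w j 0 * w k 0) * (z.2 j 0 * z.2 k 0).
  rewrite mxE expr2 big_distrlr; apply: eq_bigr => j _; apply: eq_bigr => k _ /=.
  by rewrite !mxE; ring.
under eq_Rintegral do rewrite expand.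
rewrite RintegralR_sum => [|j]; last first.
  by apply: integrableR_sum => k; apply: integrableRZ; exact: integrable_snd_coordM.
have -> : (w^T *m ymoment P *m w) 0 0 =
    \sum_j \sum_k (w j 0 * w k 0) * ymoment P j k.
  rewrite mxE; under eq_bigr do rewrite mxE mulr_suml.
  rewrite exchange_big; apply: eq_bigr => j _; apply: eq_bigr => k _ /=.
  by rewrite !mxE; ring.
apply: eq_bigr => j _.
rewrite RintegralR_sum => [|k]; last by apply: integrableRZ; exact: integrable_snd_coordM.
apply: eq_bigr => k _; rewrite RintegralZl //; last exact: integrable_snd_coordM.
by rewrite /ymoment mxE.
Qed.

Lemma Rintegral_sqnorm_mulmx_snd_ge (c : R) (B : 'M[R]_m) :
  (forall v : 'cV[R]_m, c * (v^T *m v) 0 0 <= (v^T *m ymoment P *m v) 0 0) ->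
  c * sqfrob B <= Rintegral P setT (fun z : Z => sqnorm (B *m z.2)).
Proof.
move=> ymoment_ge.
have rowE (z : Z) (i : 'I_m) : (B *m z.2) i 0 = ((row i B)^T^T *m z.2) 0 0.
  by rewrite trmxK -row_mul [RHS]mxE.
rewrite /sqnorm RintegralR_sum => [|i]; last first.
  apply: (integrable_quadratic (a := sqfrob B)) => [|z].
    by apply: measurable_funX; exact: (measurable_cV_mulmx B measurable_cV_snd i).
  rewrite ger0_norm ?sqr_ge0 //.
  have := coord_sqr_le_sqnorm (B *m z.2) i; have := sqnorm_mulmx B z.2.
  have := sqnorm_ge0 z.1; have := sqfrob_ge0 B; nra.
rewrite /sqfrob mulr_sumr; apply: ler_sum => i _.
under eq_Rintegral do rewrite rowE.
have rowsq : ((row i B)^T^T *m (row i B)^T) 0 0 = \sum_j B i j ^+ 2.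
  by rewrite trmxK mxE; apply: eq_bigr => j _; rewrite !mxE expr2.
by rewrite Rintegral_sqr_dot_snd -rowsq; exact: ymoment_ge.
Qed.

End Moments.

Definition cost (w : Z * Z) : R :=
  sqnorm (w.1.1 - w.2.1) + sqnorm (w.1.2 - w.2.2).

Lemma measurable_cost : measurable_fun setT cost.
Proof.
by apply: measurable_funD; apply: measurable_sqnorm; apply: measurable_cVB;
  apply: measurable_cV_comp; rewrite /=;
  solve [exact: measurable_cV_fst | exact: measurable_cV_snd |
         exact: measurable_fst | exact: measurable_snd].
Qed.

Section Couplings.
Variables (K : R) (P Q : probability Z R).
Hypotheses (PK : second_moments_le K P) (QK : second_moments_le K Q).

Lemma coupling_product : coupling P Q (P \x Q)%E.
Proof.
split => A mA.
  rewrite -setXT; apply: (eq_trans (product_measure1E P Q mA measurableT)).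
  by transitivity (P A * 1)%E; [congr (_ * _)%E; exact: probability_setT|exact: mule1].
rewrite -setTX; apply: (eq_trans (product_measure1E P Q measurableT mA)).
by transitivity (1 * Q A)%E; [congr (_ * _)%E; exact: probability_setT|exact: mul1e].
Qed.

Lemma integrable_cost G : coupling P Q G -> G.-integrable setT (EFin \o cost).
Proof.
case=> G1 G2.
have [iP1 _] := integral_marginal measurable_fst G1
  (measurable_sqnorm measurable_cV_fst) (integrable_sqnorm_fst PK).
have [iP2 _] := integral_marginal measurable_fst G1
  (measurable_sqnorm measurable_cV_snd) (integrable_sqnorm_snd PK).
have [iQ1 _] := integral_marginal measurable_snd G2
  (measurable_sqnorm measurable_cV_fst) (integrable_sqnorm_fst QK).
have [iQ2 _] := integral_marginal measurable_snd G2
  (measurable_sqnorm measurable_cV_snd) (integrable_sqnorm_snd QK).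
apply: (integrableR_le measurable_cost (integrableRD (integrableRZ 2
  (integrableRD iP1 iQ1)) (integrableRZ 2 (integrableRD iP2 iQ2)))) => w.
rewrite ger0_norm ?addr_ge0 ?sqnorm_ge0 //=.
by apply: le_trans (lerD (sqnormB_le _ _) (sqnormB_le _ _)) _; lra.
Qed.

Lemma W2sq_ge0 : (0 <= W2sq P Q)%E.
Proof.
apply: le_ereal_inf_tmp => _ [G _ <-].
by apply: integral_ge0 => w _; rewrite lee_fin addr_ge0 ?sqnorm_ge0.
Qed.

Lemma W2sq_fin_num : W2sq P Q \is a fin_num.
Proof.
rewrite ge0_fin_numE ?W2sq_ge0 //.
have iPQ := integrable_cost coupling_product.
apply: le_lt_trans (ltry (Rintegral (P \x Q)%E setT cost)).
apply: ereal_inf_lbound; exists (P \x Q)%E; first exact: coupling_product.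
exact: integral_EFin.
Qed.

Lemma le_W2sq_couplings (x a b : R) : 0 < a ->
  (forall G, coupling P Q G -> x <= a * Rintegral G setT cost + b) ->
  x <= a * fine (W2sq P Q) + b.
Proof.
move=> a0 xG; apply/ler_addgt0Pr => e e0.
have : (W2sq P Q < (fine (W2sq P Q) + e / a)%:E)%E.
  by rewrite -[X in (X < _)%E](fineK W2sq_fin_num) lte_fin ltrDl divr_gt0.
case/ereal_inf_lt => _ [G cG <-]; rewrite (integral_EFin (integrable_cost cG)).
rewrite lte_fin => /ltW costG; apply: (le_trans (xG G cG)).
have := ler_wpM2l (ltW a0) costG; rewrite mulrDr mulrCA divff ?mulr1 ?gt_eqF //.
lra.
Qed.

End Couplings.
End PairSpace.

Section Objective.
Context {R : realType} {n m : nat}.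
Local Notation Z := (pairsp R n m).
Variable A : 'M[R]_(m, n).

Definition loss (B : 'M[R]_m) (z : Z) : R := sqnorm (A^T *m B *m z.2 - z.1).

Lemma measurable_loss B : measurable_fun setT (loss B).
Proof.
apply/measurable_sqnorm/measurable_cVB; last exact: measurable_cV_fst.
exact: measurable_cV_mulmx measurable_cV_snd.
Qed.

Section Minimizers.
Variables (K : R) (P : probability Z R).
Hypothesis PK : second_moments_le K P.
Local Notation Eloss B := (Rintegral P setT (loss B)).

Lemma integrable_loss B : P.-integrable setT (EFin \o loss B).
Proof.
apply: (integrable_quadratic PK (a := 2 * sqfrob (A^T *m B) + 2)) => [|z].
  exact: measurable_loss.
rewrite ger0_norm ?sqnorm_ge0 //.
have := sqnormB_le (A^T *m B *m z.2) z.1; have := sqnorm_mulmx (A^T *m B) z.2.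
have := sqnorm_ge0 z.1; have := sqnorm_ge0 z.2; have := sqfrob_ge0 (A^T *m B).
rewrite /loss; nra.
Qed.

Lemma Fobj_Rintegral lam rho B :
  Fobj A lam rho P B = (Rintegral P setT (loss B) + lam * rho B)%:E.
Proof. by rewrite /Fobj EFinD -integral_EFin //; exact: integrable_loss. Qed.

Lemma minimizer_quadratic_growth (lam mu : R) (rho : 'M[R]_m -> R) (B Y : 'M[R]_m) :
  0 < lam -> strongly_convex mu rho -> is_minimizer A lam rho P B ->
  Eloss B + lam * rho B + lam * mu / 4 * sqfrob (B - Y) <= Eloss Y + lam * rho Y.
Proof.
move=> lam0 convex minB; set M := (1 - 2^-1) *: B + 2^-1 *: Y.
have half01 : 0 <= (2^-1 : R) <= 1 by apply/andP; split; lra.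
have := minB M; rewrite !Fobj_Rintegral lee_fin => FM.
have iloss := integrable_loss.
have lossM : Eloss M <= (1 - 2^-1) * Eloss B + 2^-1 * Eloss Y.
  have iconvex := integrableRD (integrableRZ (1 - 2^-1) (iloss B))
    (integrableRZ 2^-1 (iloss Y)).
  apply: le_trans (le_Rintegral measurableT (iloss M) iconvex _) _ => [z _|].
    rewrite /loss /M mulmxDr -!scalemxAr mulmxDl -!scalemxAl; exact: sqnorm_convex.
  by rewrite RintegralD ?RintegralZl //; exact: integrableRZ.
have := ler_wpM2l (ltW lam0) (strongly_convex_combination B Y convex half01).
lra.
Qed.

Lemma Rintegral_loss_growth (s c : R) (B : 'M[R]_m) : 0 < s ->
  (forall v : 'cV[R]_m, s * sqnorm v <= sqnorm (A^T *m v)) ->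
  (forall v : 'cV[R]_m, c * (v^T *m v) 0 0 <= (v^T *m ymoment P *m v) 0 0) ->
  s * c * sqfrob B / 2 - 2 * K <= Eloss B - Eloss 0.
Proof.
move=> s0 Acoercive ymoment_ge.
have iloss := integrable_loss; have iBy := integrable_sqnorm_mulmx_snd PK B.
have iX := integrable_sqnorm_fst PK.
have pointwise (z : Z) :
    s / 2 * sqnorm (B *m z.2) + (-2) * sqnorm z.1 <= loss B z - loss 0 z.
  rewrite /loss mulmx0 mul0mx sub0r sqnormN -mulmxA.
  by have := sqnorm_subr_ge (A^T *m (B *m z.2)) z.1; have := Acoercive (B *m z.2); lra.
have := le_Rintegral measurableT (integrableRD (integrableRZ (s / 2) iBy)
  (integrableRZ (-2) iX)) (integrableRB (iloss B) (iloss 0))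
  (fun z _ => pointwise z).
rewrite RintegralB // RintegralD ?RintegralZl //; try exact: integrableRZ.
have s20 : 0 <= s / 2 by rewrite divr_ge0 // ltW.
have := ler_wpM2l s20 (Rintegral_sqnorm_mulmx_snd_ge PK B ymoment_ge).
have := Rintegral_sqnorm_fst_le PK; lra.
Qed.

Lemma minimizer_sqfrob_le (s c lam mu : R) (rho : 'M[R]_m -> R) (B : 'M[R]_m) :
  0 < s -> 0 < c -> 0 < lam -> 0 < mu ->
  (forall v : 'cV[R]_m, s * sqnorm v <= sqnorm (A^T *m v)) ->
  (forall v : 'cV[R]_m, c * (v^T *m v) 0 0 <= (v^T *m ymoment P *m v) 0 0) ->
  differentiable rho 0 -> strongly_convex mu rho -> is_minimizer A lam rho P B ->
  sqfrob B <= 4 * K / (s * c) + 16 * sqfrob (grad rho 0) / mu ^+ 2.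
Proof.
move=> s0 c0 lam0 mu0 Acoercive ymoment_ge drho convex minB.
have K0 := second_moments_bound_ge0 PK.
have growth := minimizer_quadratic_growth 0 lam0 convex minB.
have loss_growth := Rintegral_loss_growth B s0 Acoercive ymoment_ge.
have grad_le := convex_grad_le B drho (strongly_convex_convex (ltW mu0) convex).
have amgm := frob_dot_amgm B (grad rho 0) (divr_gt0 mu0 (ltr0n _ 4)).
rewrite subr0 in growth grad_le; rewrite invf_div in amgm.
set X := sqfrob B in growth loss_growth amgm *; set g := sqfrob (grad rho 0) in amgm *.
have lin : (s * c / 2 + lam * mu / 8) * X <= 2 * K + lam * (2 / mu) * g.
  have := ler_wpM2l (ltW lam0) grad_le; have := ler_wpM2l (ltW lam0) amgm.
  have -> : lam * (2 / mu) * g = lam * (4 / mu * g) / 2 by field; rewrite gt_eqF.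
  lra.
have -> : 4 * K / (s * c) + 16 * g / mu ^+ 2 =
    2 * K / (s * c / 2) + lam * (2 / mu) * g / (lam * mu / 8).
  by field; rewrite !gt_eqF.
have g0 : 0 <= g := sqfrob_ge0 _.
apply: le_div_add_div lin;
  by rewrite ?divr_gt0 ?mulr_gt0 ?mulr_ge0 ?invr_ge0 ?g0 ?K0 ?ltW.
Qed.

End Minimizers.
End Objective.

Section Stability.
Context {R : realType} {n m : nat}.
Local Notation Z := (pairsp R n m).
Variables (A : 'M[R]_(m, n)) (K lam mu : R) (rho : 'M[R]_m -> R).
Variables (P Q : probability Z R) (BP BQ : 'M[R]_m).
Hypotheses (PK : second_moments_le K P) (QK : second_moments_le K Q).
Hypotheses (lam0 : 0 < lam) (mu0 : 0 < mu) (convex : strongly_convex mu rho).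
Hypotheses (minP : is_minimizer A lam rho P BP) (minQ : is_minimizer A lam rho Q BQ).
Local Notation gap z := (loss A BQ z - loss A BP z).
Local Notation Egap S := (Rintegral S setT (loss A BQ) - Rintegral S setT (loss A BP)).
Local Notation k := (loss_lip_const A (sqfrob (BQ + BP))).

Lemma minimizers_gap :
  lam * mu * sqfrob (BQ - BP) <= 2 * (Egap P - Egap Q).
Proof.
have growthP := minimizer_quadratic_growth PK BQ lam0 convex minP.
have growthQ := minimizer_quadratic_growth QK BP lam0 convex minQ.
rewrite -opprB sqfrobN in growthP.
lra.
Qed.

Lemma coupled_gap_le G (de : R) : coupling P Q G -> 0 < de -> 0 < frob (BQ - BP) ->
  2 * (Egap P - Egap Q) <=
  frob (BQ - BP) * (k / de * Rintegral G setT cost + de * k * (3 * K)).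
Proof.
move=> [G1 G2] de0 d0; set d := frob (BQ - BP).
have mgap := measurable_funB (measurable_loss A BQ) (measurable_loss A BP).
have igap S (SK : second_moments_le K S) :=
  integrableRB (integrable_loss A SK BQ) (integrable_loss A SK BP).
have [iP eP] := integral_marginal measurable_fst G1 mgap (igap P PK).
have [iQ eQ] := integral_marginal measurable_snd G2 mgap (igap Q QK).
have [i1 e1] := integral_marginal measurable_fst G1
  (measurable_sqnorm measurable_cV_snd) (integrable_sqnorm_snd PK).
have [i2 e2] := integral_marginal measurable_fst G1
  (measurable_sqnorm measurable_cV_fst) (integrable_sqnorm_fst PK).
have [i3 e3] := integral_marginal measurable_snd G2
  (measurable_sqnorm measurable_cV_snd) (integrable_sqnorm_snd QK).
have ic := integrable_cost PK QK (conj G1 G2).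
have pointwise (w : Z * Z) :
    2 * (gap w.1 - gap w.2) <= d * (k / de * cost w +
      de * k * (sqnorm w.1.2 + sqnorm w.1.1 + sqnorm w.2.2)).
  exact: loss_difference_le.
have iL := integrableRB iP iQ.
have iM := integrableRD (integrableRD i1 i2) i3.
have iR := integrableRD (integrableRZ (k / de) ic) (integrableRZ (de * k) iM).
have := le_Rintegral measurableT (integrableRZ 2 iL) (integrableRZ d iR)
  (fun w _ => pointwise w).
rewrite (RintegralZl _ measurableT iL) (RintegralZl _ measurableT iR).
rewrite (RintegralB measurableT iP iQ) eP eQ.
rewrite (RintegralB measurableT (integrable_loss A PK BQ) (integrable_loss A PK BP)).
rewrite (RintegralB measurableT (integrable_loss A QK BQ) (integrable_loss A QK BP)).
rewrite (RintegralD measurableT (integrableRZ _ ic) (integrableRZ _ iM)).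
rewrite (RintegralZl _ measurableT ic) (RintegralZl _ measurableT iM).
rewrite (RintegralD measurableT (integrableRD i1 i2) i3) (RintegralD measurableT i1 i2).
rewrite e1 e2 e3 => /le_trans; apply.
apply: ler_wpM2l; first exact: ltW.
have k0 : 0 <= k := ltW (loss_lip_const_gt0 _ (sqfrob_ge0 _)).
rewrite lerD2l; apply: ler_wpM2l; first by rewrite mulr_ge0 // ltW.
have := Rintegral_sqnorm_snd_le PK; have := Rintegral_sqnorm_fst_le PK.
have := Rintegral_sqnorm_snd_le QK; lra.
Qed.

Lemma minimizers_frob_le :
  lam * mu * frob (BQ - BP) <= k * (1 + 3 * K) * W2 P Q.
Proof.
have k0 : 0 < k := loss_lip_const_gt0 _ (sqfrob_ge0 _).
have K0 := second_moments_bound_ge0 PK.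
have lm0 : 0 < lam * mu := mulr_gt0 lam0 mu0.
have [d0|] := ltrP 0 (frob (BQ - BP)); last first.
  rewrite -(pmulr_rle0 _ lm0) => /le_trans; apply.
  by rewrite !mulr_ge0 ?sqrtr_ge0 ?(ltW k0) //; lra.
apply: le_mul_sqrt_of_scaled;
  rewrite ?fine_ge0 ?W2sq_ge0 ?mulr_ge0 ?(ltW k0) // => de de0.
apply: (le_W2sq_couplings PK QK) => [|G cG]; first exact: divr_gt0.
have := coupled_gap_le cG de0 d0; have := minimizers_gap; rewrite -sqr_frob.
move=> gap_ge gap_le; rewrite -(ler_pM2l d0); apply: le_trans gap_le.
by rewrite mulrCA -expr2.
Qed.

End Stability.

Theorem mainTheorem2 (R : realType) (m n : nat) (A : 'M[R]_(m, n))
  (K c mu : R) (G0 : 'M[R]_m) :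
  (m <= n)%N -> \rank A = m -> 0 < K -> 0 < c -> 0 < mu ->
  exists C : R, 0 < C /\
  forall (lam : R) (rho : 'M[R]_m -> R),
    0 < lam ->
    (forall X : 'M[R]_m, differentiable rho X) ->
    strongly_convex mu rho ->
    grad rho 0 = G0 ->
    forall (P Q : probability (pairsp R n m) R) (BP BQ : 'M[R]_m),
      PKc K c P -> PKc K c Q ->
      is_minimizer A lam rho P BP -> is_minimizer A lam rho Q BQ ->
      frob (BP - BQ) <= C / (lam * mu) * W2 P Q.
Proof.
move=> _ rkA K0 c0 mu0.
have [s s0 Acoercive] := full_row_rank_sqnorm_lb rkA.
set Bmax := 4 * K / (s * c) + 16 * sqfrob G0 / mu ^+ 2.
have Bmax0 : 0 <= Bmax.
  by rewrite addr_ge0 // divr_ge0 ?mulr_ge0 ?sqfrob_ge0 ?sqr_ge0 // ltW.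
exists (loss_lip_const A (4 * Bmax) * (1 + 3 * K)); split.
  rewrite mulr_gt0 ?loss_lip_const_gt0 ?mulr_ge0 //; lra.
move=> lam rho lam0 drho convex gradE P Q BP BQ hP hQ minP minQ.
have bound S B : PKc K c S -> is_minimizer A lam rho S B -> sqfrob B <= Bmax.
  case=> S1 S2 Sc minB; rewrite /Bmax -gradE.
  exact: (minimizer_sqfrob_le (conj S1 S2) s0 c0 lam0 mu0 Acoercive Sc (drho 0)
    convex minB).
have sum_le : sqfrob (BQ + BP) <= 4 * Bmax.
  apply: le_trans (sqfrobD_le _ _) _.
  by have := bound _ _ hP minP; have := bound _ _ hQ minQ; lra.
rewrite -frobN opprB mulrAC ler_pdivlMr ?mulr_gt0 // mulrC.
apply: le_trans (minimizers_frob_le (PKc_second_moments hP) (PKc_second_moments hQ)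
  lam0 mu0 convex minP minQ) _.
rewrite ler_wpM2r ?sqrtr_ge0 // ler_wpM2r ?loss_lip_const_le //; lra.
Qed.
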